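(* Assume the setting described in the context, and let $i\in\{1,\dots,t\}$. Let $\mathbf p\in\mathcal C^*$ be divisible by none of $\pi_1,\dots,\pi_{i-1}$. Then there exist a unique $j\in\mathbb N$ and a unique $\mathbf q\in\mathcal C^*$ divisible by none of $\pi_1,\dots,\pi_i$ such that $\mathbf p=j\pi_i+\mathbf q$ (in transvectant terms: $\mathbb T(\mathbf p)\equiv\vartheta_i^j\,\mathbb T(\mathbf q)$).
   Context: $\mathbb N=\{0,1,2,\dots\}$. For a real square matrix $A_0$ put $\mathcal D_{A_0}f(\mathbf x)=f'(\mathbf x)A_0\mathbf x$. Let $(\acute X,\acute Y,\acute Z),(\grave X,\grave Y,\grave Z)$ be $\mathfrak{sl}_2$ triads ($[X,Y]=Z,[Z,X]=2X,[Z,Y]=-2Y$) of real $n\times n$ resp. $m\times m$ matrices; $\acute{\mathcal X}=\mathcal D_{\acute Y},\acute{\mathcal Y}=\mathcal D_{\acute X},\acute{\mathcal Z}=\mathcal D_{\acute Z}$ on $\mathbb R[[\mathbf x]]$, similarly on $\mathbb R[[\mathbf y]]$; $\acute{\mathcal J}=\ker\acute{\mathcal X}$, $\grave{\mathcal J}=\ker\grave{\mathcal X}$. Hilbert bases $\alpha=(\alpha_1,\dots,\alpha_p)$ of $\acute{\mathcal J}$ and $\beta=(\beta_1,\dots,\beta_q)$ of $\grave{\mathcal J}$ consist of homogeneous weight invariants (eigenvectors of $\acute{\mathcal Z}$ resp. $\grave{\mathcal Z}$ with weights $\widehat\alpha_i,\widehat\beta_j$) whose monomials span by countable linear combinations;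 $\widehat\alpha\mathbf k=\sum\widehat\alpha_ik_i$, $\widehat\beta\boldsymbol\ell=\sum\widehat\beta_j\ell_j$. $\acute A\subset\mathbb N^p,\grave A\subset\mathbb N^q$ are standard preferred sets (monomials $\alpha^{\mathbf k}$, $\mathbf k\in\acute A$, pairwise distinct, linearly independent, spanning $\acute{\mathcal J}$ by countable combinations; $\acute A$ closed under componentwise-smaller vectors; same for $\grave A$). $\mathcal C=\{(\mathbf k;\boldsymbol\ell;s)\in\mathbb N^{p+q+1}:s\le\widehat\alpha\mathbf k,s\le\widehat\beta\boldsymbol\ell\}$ (the element $(\mathbf k;\boldsymbol\ell;s)$ represents the transvectant $\mathbb T(\mathbf k;\boldsymbol\ell;s)=(\alpha^{\mathbf k},\beta^{\boldsymbol\ell})^{(s)}$, defined by $(f,g)^{(s)}=\sum_{j=0}^s(-1)^j\binom sj\frac{(\widehat f-j)!}{(\widehat f-s)!}\frac{(\widehat g-s+j)!}{(\widehat g-s)!}(\acute{\mathcal Y}^jf)(\grave{\mathcal Y}^{s-j}g)$), $\mathcal C^*=\{(\mathbf k;\boldsymbol\ell;s)\in\mathcal C:\mathbf k\in\acute A,\boldsymbol\ell\in\grave A\}$. For $\mathbf p,\mathbf r\in\mathcal C$, $\mathbf p$ is divisible by $\mathbf r$ if $\mathbf p-\mathbf r\in\mathcal C$. A prime is a nonzero element of $\mathcal C$ that is not a sum of two nonzero elements of $\mathcal C$; $\pi_1,\dots,\pi_t$ are the primes lying in $\mathcal C^*$, listed in a fixed order, and $\vartheta_i=\mathbb T(\pi_i)$.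 Equivalence $\equiv$ of a transvectant monomial $\prod\mathbb T(\mathbf p_r)^{m_r}$ with $\mathbb T(\mathbf p)$ means $\mathbf p=\sum m_r\mathbf p_r$. *)

(* Combinatorial skeleton of the transvectant cone C. *)
From mathcomp Require Import all_boot.
Set Implicit Arguments. Unset Strict Implicit. Unset Printing Implicit Defensive.

(* An element (k; l; s) of N^(p+q+1). *)
Definition cvec (p q : nat) : Type :=
  ({ffun 'I_p -> nat} * {ffun 'I_q -> nat} * nat)%type.

Definition cadd p q (x y : cvec p q) : cvec p q :=
  ([ffun i => x.1.1 i + y.1.1 i], [ffun j => x.1.2 j + y.1.2 j], x.2 + y.2).

Definition czero p q : cvec p q := ([ffun=> 0], [ffun=> 0], 0).

Definition cscale p q (j : nat) (x : cvec p q) : cvec p q :=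
  iter j (cadd x) (czero p q).

Definition wdeg n (w : 'I_n -> nat) (k : {ffun 'I_n -> nat}) : nat :=
  \sum_(i < n) w i * k i.

Definition inC p q (aw : 'I_p -> nat) (bw : 'I_q -> nat) (x : cvec p q) : Prop :=
  x.2 <= wdeg aw x.1.1 /\ x.2 <= wdeg bw x.1.2.

Definition inCstar p q (aw : 'I_p -> nat) (bw : 'I_q -> nat)
  (A : pred {ffun 'I_p -> nat}) (B : pred {ffun 'I_q -> nat}) (x : cvec p q) : Prop :=
  inC aw bw x /\ A x.1.1 /\ B x.1.2.

Definition cdivisible p q (aw : 'I_p -> nat) (bw : 'I_q -> nat) (x r : cvec p q) : Prop :=
  exists d, inC aw bw d /\ x = cadd r d.

Definition cprime p q (aw : 'I_p -> nat) (bw : 'I_q -> nat) (x : cvec p q) : Prop :=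
  [/\ inC aw bw x, x <> czero p q &
   ~ exists y z, [/\ inC aw bw y, inC aw bw z, y <> czero p q, z <> czero p q
                   & x = cadd y z]].

Definition downclosed n (A : pred {ffun 'I_n -> nat}) : Prop :=
  forall k k' : {ffun 'I_n -> nat}, (forall i, k' i <= k i) -> A k -> A k'.

(* Since pi_i is a nonzero element of C, subtracting it while the remainder is
   still divisible by it must stop (the total size drops each time); this gives
   x = j pi_i + r with r not divisible by pi_i.  The decomposition is unique:
   if j pi_i + r = j' pi_i + r' with j > j', cancelling j' pi_i shows that r' is
   divisible by pi_i.  The remainder r stays in C^* because the preferred sets
   are closed under smaller vectors, and an earlier prime dividing r would
   divide x = j pi_i + r as well, C being closed under addition. *)
From Stdlib Require Import Classical.
From mathcomp Require Import all_boot zify.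

Set Implicit Arguments. Unset Strict Implicit.

Section Cone.
Variables (p q : nat) (aw : 'I_p -> nat) (bw : 'I_q -> nat).
Local Notation cvec := (cvec p q).
Local Notation czero := (czero p q).
Local Notation inC := (inC aw bw).
Local Notation cdivisible := (cdivisible aw bw).

Lemma cvec_eq (x y : cvec) :
  x.1.1 =1 y.1.1 -> x.1.2 =1 y.1.2 -> x.2 = y.2 -> x = y.
Proof.
by case: x => [[a b] c]; case: y => [[a' b'] c'] /= /ffunP -> /ffunP -> ->.
Qed.

Lemma caddA (x y z : cvec) : cadd x (cadd y z) = cadd (cadd x y) z.
Proof. by apply: cvec_eq => [i|i|] /=; rewrite ?ffunE ?addnA. Qed.

Lemma caddC (x y : cvec) : cadd x y = cadd y x.
Proof. by apply: cvec_eq => [i|i|] /=; rewrite ?ffunE; exact: addnC. Qed.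

Lemma cadd0 (x : cvec) : cadd czero x = x.
Proof. by apply: cvec_eq => [i|i|] /=; rewrite ?ffunE. Qed.

Lemma caddI (a : cvec) : injective (cadd a).
Proof.
move=> b c E; apply: cvec_eq => [i|i|].
- by have := congr1 (fun v : cvec => v.1.1 i) E => /=; rewrite !ffunE => /addnI.
- by have := congr1 (fun v : cvec => v.1.2 i) E => /=; rewrite !ffunE => /addnI.
- by have := congr1 snd E => /= /addnI.
Qed.

Lemma cscaleD a b (x : cvec) :
  cscale (a + b) x = cadd (cscale a x) (cscale b x).
Proof. by elim: a => [|a IH] /=; rewrite ?cadd0 // IH caddA. Qed.

Lemma wdegD n (w : 'I_n -> nat) (k k' : {ffun 'I_n -> nat}) :
  wdeg w [ffun i => k i + k' i] = wdeg w k + wdeg w k'.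
Proof. by rewrite /wdeg -big_split; apply: eq_bigr => i _; rewrite ffunE mulnDr. Qed.

Lemma inC_add (x y : cvec) : inC x -> inC y -> inC (cadd x y).
Proof. by move=> [? ?] [? ?]; split; rewrite /= wdegD leq_add. Qed.

Lemma inC_scale j (x : cvec) : inC x -> inC (cscale j x).
Proof. by move=> xC; elim: j => [|j IH] //=; exact: inC_add. Qed.

Lemma cdivisible_addl (y x r : cvec) :
  inC y -> cdivisible x r -> cdivisible (cadd y x) r.
Proof.
move=> yC [d [dC ->]]; exists (cadd y d); split; first exact: inC_add.
by rewrite !caddA (caddC y).
Qed.

Definition csize (x : cvec) :=
  \sum_(i < p) x.1.1 i + \sum_(i < q) x.1.2 i + x.2.

Lemma csizeD (x y : cvec) : csize (cadd x y) = csize x + csize y.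
Proof.
rewrite /csize /=.
have sumD n (f g : 'I_n -> nat) :
    \sum_(i < n) [ffun i => f i + g i] i = \sum_(i < n) f i + \sum_(i < n) g i.
  by rewrite -big_split; apply: eq_bigr => i _; rewrite ffunE.
by rewrite !sumD [in LHS](addnACA (\sum_(i < p) _ i)) addnACA.
Qed.

Lemma csize_gt0 (x : cvec) : x <> czero -> 0 < csize x.
Proof.
move=> nz; rewrite lt0n /csize !addn_eq0 !sum_nat_eq0; apply: contra_notN nz.
case/andP => /andP [/forallP x1 /forallP x2] /eqP x3.
by apply: cvec_eq => [i|i|] //=; rewrite ffunE; apply/eqP; [exact: x1 | exact: x2].
Qed.

Lemma cdivision (pi y : cvec) : pi <> czero -> inC y ->
  exists j r, [/\ inC r, ~ cdivisible r pi & y = cadd (cscale j pi) r].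
Proof.
move=> nz; have pi_gt0 := csize_gt0 nz.
elim: {y}(csize y) {-2}y (leqnn (csize y)) => [|n IH] y ys yC;
  (have [[d [dC Ey]] | ynd] := classic (cdivisible y pi);
   last by exists 0, y; rewrite cadd0).
- by move: ys; rewrite Ey csizeD; lia.
- have ds : csize d <= n by move: ys; rewrite Ey csizeD; lia.
  have [j [r [rC rnd Ed]]] := IH d ds dC.
  by exists j.+1, r; rewrite Ey Ed caddA.
Qed.

Lemma cdivision_uniq (pi s t : cvec) a b :
  inC pi -> inC s -> inC t -> ~ cdivisible s pi -> ~ cdivisible t pi ->
  cadd (cscale a pi) s = cadd (cscale b pi) t -> a = b /\ s = t.
Proof.
move=> piC.
have le_quo a' b' (s' t' : cvec) : inC s' -> ~ cdivisible t' pi ->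
    cadd (cscale a' pi) s' = cadd (cscale b' pi) t' -> a' <= b'.
  move=> s'C t'nd E; rewrite leqNgt; apply: contra_notN t'nd => lt_ba.
  have [k Ea] : exists k, a' = b' + k.+1 by exists (a' - b').-1; lia.
  exists (cadd (cscale k pi) s'); split.
    by apply: inC_add => //; exact: inC_scale.
  by apply: (@caddI (cscale b' pi)); rewrite -E Ea cscaleD /= -!caddA.
move=> sC tC snd tnd E.
have eab : a = b by apply/eqP; rewrite eqn_leq (le_quo _ _ s t) ?(le_quo _ _ t s).
by split=> //; move: E; rewrite eab => /caddI.
Qed.

Lemma inCstar_addl (A : pred {ffun 'I_p -> nat}) (B : pred {ffun 'I_q -> nat})
    (y r : cvec) :
  downclosed A -> downclosed B -> inCstar aw bw A B (cadd y r) -> inC r ->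
  inCstar aw bw A B r.
Proof.
move=> hA hB [_ [yrA yrB]] rC; split=> //; split.
- by apply: hA yrA => i; rewrite ffunE leq_addl.
- by apply: hB yrB => i; rewrite ffunE leq_addl.
Qed.

End Cone.

(* pis = [pi_1; ...; pi_t] (0-based: nth pis m = pi_(m+1)); index i here is
   the paper's i-1. *)
Theorem lemma15p2 (p q : nat) (aw : 'I_p -> nat) (bw : 'I_q -> nat)
  (A : pred {ffun 'I_p -> nat}) (B : pred {ffun 'I_q -> nat})
  (hA : downclosed A) (hB : downclosed B)
  (pis : seq (cvec p q)) (hu : uniq pis)
  (hpis : forall x, x \in pis <-> (cprime aw bw x /\ inCstar aw bw A B x))
  (i : nat) (hi : i < size pis)
  (x : cvec p q) (hx : inCstar aw bw A B x)
  (hnd : forall m, m < i -> ~ cdivisible aw bw x (nth (czero p q) pis m)) :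
  exists! jq : nat * cvec p q,
    [/\ inCstar aw bw A B jq.2,
        forall m, m <= i -> ~ cdivisible aw bw jq.2 (nth (czero p q) pis m)
      & x = cadd (cscale jq.1 (nth (czero p q) pis i)) jq.2].
Proof.
set pi := nth (czero p q) pis i.
have [[piC piNZ _] _] : cprime aw bw pi /\ inCstar aw bw A B pi.
  by apply/hpis; exact: mem_nth.
have xC := hx.1.
have [j [r [rC rnd Ex]]] := cdivision piNZ xC.
exists (j, r); split.
  split=> /=; last exact: Ex.
  - by apply: (inCstar_addl (y := cscale j pi) hA hB _ rC); rewrite -Ex.
  - move=> m; rewrite leq_eqVlt => /predU1P [-> // | lt_mi] rdiv.
    apply: (hnd m lt_mi); rewrite Ex.
    by apply: cdivisible_addl rdiv; exact: inC_scale.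
move=> [j' r'] /= [[r'C _] r'nd Ex'].
by have [-> ->] := cdivision_uniq piC r'C rC (r'nd i (leqnn i)) rnd (etrans (esym Ex') Ex).
Qed.
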